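(* Let $\mathbb{R}^n$ be endowed with the $\ell_1$ norm and $\mathbb{R}^m$ with an arbitrary norm $\|\cdot\|$. Suppose $A\in\mathbb{R}^{m\times n}$ has at least two different columns and $f:\mathbb{R}^m\to\mathbb{R}\cup\{\infty\}$ is a differentiable convex function that is $L_f$-smooth and $\mu_f$-strongly convex on $\mathrm{conv}(A)$. Then \[ L_{f,A}\le \frac{L_f\cdot \mathrm{diam}(A)^2}{4},\qquad \mu_{f,A}\ge\frac{\mu_f\cdot\Phi(A)^2}{4}, \] and in particular $\dfrac{L_{f,A}}{\mu_{f,A}}\le\dfrac{L_f}{\mu_f}\cdot\dfrac{\mathrm{diam}(A)^2}{\Phi(A)^2}$.
   Context: A differentiable convex $f$ is $L_f$-smooth (with $L_f>0$) on $S\subseteq\mathrm{dom}(f)$ if $f(v)\le f(u)+\langle\nabla f(u),v-u\rangle+\frac{L_f}{2}\|v-u\|^2$ for all $u,v\in S$, and $\mu_f$-strongly convex (with $\mu_f\ge0$) on $S$ if $f(v)\ge f(u)+\langle\nabla f(u),v-u\rangle+\frac{\mu_f}{2}\|v-u\|^2$ for all $u,v\in S$. $\Delta_{n-1}=\{x\in\mathbb{R}^n_+:\sum_ix_i=1\}$; $A$ is identified with the set of its columns; $\mathrm{conv}(A)=\{Ax:x\in\Delta_{n-1}\}$; for $u\in\mathrm{conv}(A)$, $Z(u)=\{z\in\Delta_{n-1}:Az=u\}$ and $\mathrm{dist}(x,Z(u))=\min_{z\in Z(u)}\|x-z\|_1$. The relative constants are \[ L_{f,A}=\sup_{u\in\mathrm{conv}(A),\,x\in\Delta_{n-1}\setminus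 Z(u)}\frac{2(f(Ax)-f(u)-\langle\nabla f(u),Ax-u\rangle)}{\mathrm{dist}(x,Z(u))^2}, \] and $\mu_{f,A}$ the same expression with $\inf$ instead of $\sup$. $\mathrm{diam}(A)=\sup_{u,w\in A}\|u-w\|$, and the facial distance is $\Phi(A)=\min\{\mathrm{dist}(F,\mathrm{conv}(A\setminus F)):F\text{ a face of }\mathrm{conv}(A),\ \emptyset\ne F\ne\mathrm{conv}(A)\}$, with $A\setminus F$ the columns of $A$ not in $F$ and $\mathrm{dist}(F,G)=\inf_{u\in F,w\in G}\|u-w\|$. *)

From HB Require Import structures.
From mathcomp Require Import all_boot all_order all_algebra.
From mathcomp Require Import all_classical all_reals all_analysis.
Set Implicit Arguments. Unset Strict Implicit. Unset Printing Implicit Defensive.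
Import Order.TTheory GRing.Theory Num.Theory.
Import numFieldNormedType.Exports.
Local Open Scope classical_set_scope.
Local Open Scope ring_scope.

Section Defs.
Variable R : realType.

Definition simplex (n : nat) : set 'cV[R]_n :=
  [set x | (forall i, 0 <= x i 0) /\ \sum_i x i 0 = 1].

Definition l1 (n : nat) (x : 'cV[R]_n) : R := \sum_i `|x i 0|.

Definition conv_cols (m n : nat) (A : 'M[R]_(m, n)) : set 'cV[R]_m :=
  [set A *m x | x in (@simplex n)].

Definition Zset (m n : nat) (A : 'M[R]_(m, n)) (u : 'cV[R]_m) : set 'cV[R]_n :=
  [set z | (@simplex n) z /\ A *m z = u].

Definition distZ (m n : nat) (A : 'M[R]_(m, n)) (x : 'cV[R]_n) (u : 'cV[R]_m) : R :=
  inf [set l1 (x - z) | z in Zset A u].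

Definition is_norm (m : nat) (N : 'cV[R]_m -> R) : Prop :=
  [/\ forall x y, N (x + y) <= N x + N y,
      forall (a : R) x, N (a *: x) = `|a| * N x
    & forall x, N x = 0 -> x = 0].

Definition fr (m : nat) (f : 'cV[R]_m -> \bar R) : 'cV[R]_m -> R := fun x => fine (f x).

Definition convex_ext (m : nat) (f : 'cV[R]_m -> \bar R) : Prop :=
  (forall x, f x != -oo%E) /\
  (forall x y : 'cV[R]_m, forall t : R, 0 <= t <= 1 ->
     (f (t *: x + (1 - t) *: y)%R <= t%:E * f x + (1 - t)%:E * f y)%E).

(* f is finite near, and differentiable at, every point of S;
   <grad f(u), w> is then the differential  'd (fr f) u w *)
Definition differentiable_on (m : nat) (f : 'cV[R]_m -> \bar R) (S : set 'cV[R]_m) : Prop :=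
  forall u, S u -> (\forall x \near u, f x \is a fin_num) /\ differentiable (fr f) u.

Definition grad_pair (m : nat) (f : 'cV[R]_m -> \bar R) (u w : 'cV[R]_m) : R :=
  'd (fr f) u w.

Definition smooth_on (m : nat) (N : 'cV[R]_m -> R) (f : 'cV[R]_m -> \bar R)
  (S : set 'cV[R]_m) (L : R) : Prop :=
  forall u v, S u -> S v ->
    fr f v <= fr f u + grad_pair f u (v - u) + L / 2 * N (v - u) ^+ 2.

Definition strongly_convex_on (m : nat) (N : 'cV[R]_m -> R) (f : 'cV[R]_m -> \bar R)
  (S : set 'cV[R]_m) (mu : R) : Prop :=
  forall u v, S u -> S v ->
    fr f v >= fr f u + grad_pair f u (v - u) + mu / 2 * N (v - u) ^+ 2.

Definition rel_ratios (m n : nat) (A : 'M[R]_(m, n)) (f : 'cV[R]_m -> \bar R) : set (\bar R) :=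
  [set r | exists u x, [/\ conv_cols A u, (@simplex n) x, ~ Zset A u x &
     r = (2 * (fr f (A *m x) - fr f u - grad_pair f u (A *m x - u))
            / distZ A x u ^+ 2)%:E]].

Definition LfA (m n : nat) (A : 'M[R]_(m, n)) (f : 'cV[R]_m -> \bar R) : \bar R :=
  ereal_sup (rel_ratios A f).

Definition mufA (m n : nat) (A : 'M[R]_(m, n)) (f : 'cV[R]_m -> \bar R) : \bar R :=
  ereal_inf (rel_ratios A f).

Definition diam (m n : nat) (N : 'cV[R]_m -> R) (A : 'M[R]_(m, n)) : R :=
  \big[Num.max/0]_(i < n) \big[Num.max/0]_(j < n) N (col i A - col j A).

Definition convex_subset (m : nat) (C : set 'cV[R]_m) : Prop :=
  forall x y (t : R), C x -> C y -> 0 <= t <= 1 -> C (t *: x + (1 - t) *: y).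

Definition is_face (m : nat) (C F : set 'cV[R]_m) : Prop :=
  [/\ F `<=` C, convex_subset F &
      forall x y (t : R), C x -> C y -> 0 < t < 1 ->
        F (t *: x + (1 - t) *: y) -> F x /\ F y].

Definition conv_out (m n : nat) (A : 'M[R]_(m, n)) (F : set 'cV[R]_m) : set 'cV[R]_m :=
  [set A *m x | x in [set x | (@simplex n) x /\ forall j, F (col j A) -> x j 0 = 0]].

Definition set_dist (m : nat) (N : 'cV[R]_m -> R) (F G : set 'cV[R]_m) : R :=
  inf [set r | exists u w, [/\ F u, G w & r = N (u - w)]].

Definition facial_dist (m n : nat) (N : 'cV[R]_m -> R) (A : 'M[R]_(m, n)) : R :=
  inf [set r | exists F, [/\ is_face (conv_cols A) F, F <> set0, F <> conv_cols A &
                            r = set_dist N F (conv_out A F)]].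

End Defs.
Arguments simplex {R} n.

(* Upper bound: if z is a point of Z(u) nearest to x for the l1 distance, then
   Ax - u = A(x - z) and the zero-sum vector x - z equals lam (p - q) with p, q in the
   simplex and l1(x - z) = 2 lam, so ||Ax - u|| <= lam ||Ap - Aq|| <= dist(x, Z(u)) diam(A) / 2.
   Lower bound: choose p, q with disjoint supports.  If p charged a column of the minimal
   face F of conv(A) containing Aq, z could be moved inside Z(u) closer to x; hence Ap lies
   in conv(A \ F) and ||Ax - u|| = lam ||Ap - Aq|| >= lam Phi(A) = Phi(A) dist(x, Z(u)) / 2.
   The ratio bound needs Phi(A) > 0: a face is the hull of the columns it contains, and for
   each of the finitely many splittings of the columns the two disjoint hulls are at
   positive distance by compactness. *)

From HB Require Import structures.
From mathcomp Require Import all_boot all_order all_algebra.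
From mathcomp Require Import all_classical all_reals all_analysis.
From mathcomp Require Import ring lra.
Set Implicit Arguments. Unset Strict Implicit. Unset Printing Implicit Defensive.
Import Order.TTheory GRing.Theory Num.Theory.
Import numFieldNormedType.Exports.
Local Open Scope classical_set_scope.
Local Open Scope ring_scope.

Section Infimum.
Variable R : realType.
Implicit Types (S : set R).

Lemma inf_le_nonneg S r : (forall s, S s -> 0 <= s) -> S r -> inf S <= r.
Proof. by move=> S_ge0; apply: ge_inf; exists 0. Qed.

Lemma inf_nonneg S : (forall s, S s -> 0 <= s) -> 0 <= inf S.
Proof.
move=> S_ge0; have [S0|/set0P/negP] := pselect (S !=set0); first exact: lb_le_inf.
by rewrite negbK => /eqP ->; rewrite inf0.
Qed.

End Infimum.

Section Simplex.
Variables (R : realType) (n : nat).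
Implicit Types (u v x z p q : 'cV[R]_n).

Lemma sum_coordD u v : \sum_i (u + v) i 0 = \sum_i u i 0 + \sum_i v i 0.
Proof. by rewrite -big_split; apply: eq_bigr => i _; rewrite mxE. Qed.

Lemma sum_coordB u v : \sum_i (u - v) i 0 = \sum_i u i 0 - \sum_i v i 0.
Proof.
by rewrite sum_coordD -sumrN; congr (_ + _); apply: eq_bigr => i _; rewrite mxE.
Qed.

Lemma sum_coordZ a u : \sum_i (a *: u) i 0 = a * \sum_i u i 0.
Proof. by rewrite mulr_sumr; apply: eq_bigr => i _; rewrite mxE. Qed.

Lemma sum_coord_simplexB x z : simplex n x -> simplex n z -> \sum_i (x - z) i 0 = 0.
Proof. by move=> [_ x1] [_ z1]; rewrite sum_coordB x1 z1 subrr. Qed.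

Lemma simplex_coord_le1 z i : simplex n z -> 0 <= z i 0 <= 1.
Proof.
move=> [z0 z1]; rewrite z0 -z1 (bigD1 i) //= lerDl.
by apply: sumr_ge0 => j _; apply: z0.
Qed.

Lemma simplex_delta j : simplex n (delta_mx j 0 : 'cV[R]_n).
Proof.
split=> [i|]; first by rewrite mxE ler0n.
rewrite (bigD1 j) //= mxE !eqxx big1 ?addr0 // => i /negbTE ij.
by rewrite mxE ij.
Qed.

Lemma simplex_eq_delta p j : simplex n p -> p j 0 = 1 -> p = delta_mx j 0.
Proof.
move=> [p0 p1] pj.
have : \sum_(i | i != j) p i 0 == 0 by move: p1; rewrite (bigD1 j) //= pj => ?; apply/eqP; lra.
rewrite psumr_eq0 => [/allP p_out|i _]; last exact: p0.
apply/matrixP => i k; rewrite (ord1 k) mxE.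
have [->|ij] := eqVneq i j; first by rewrite pj.
by apply/eqP; have := p_out i (mem_index_enum _); rewrite ij.
Qed.

Lemma simplex_neq0 p : simplex n p -> exists j, p j 0 != 0.
Proof.
move=> [_ p1]; apply/not_existsP => p_eq0; move: p1; rewrite big1 => [/eqP|i _].
  by rewrite eq_sym oner_eq0.
by have := p_eq0 i; case: eqP.
Qed.

Lemma l1_ge0 u : 0 <= l1 u.
Proof. exact: sumr_ge0. Qed.

Lemma l1_eq0 u : l1 u = 0 -> u = 0.
Proof.
move=> /eqP; rewrite psumr_eq0 // => /allP u0.
apply/matrixP => i k; rewrite (ord1 k) mxE; apply/eqP.
by rewrite -normr_eq0; apply: (implyP (u0 i (mem_index_enum _))).
Qed.

Lemma l1_subr_le u v : l1 (u - v) <= l1 u + l1 v.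
Proof.
rewrite /l1 -big_split; apply: ler_sum => i _.
by rewrite !mxE -(normrN (v i 0)) ler_normD.
Qed.

Lemma l1_nonneg u : (forall i, 0 <= u i 0) -> l1 u = \sum_i u i 0.
Proof. by move=> u0; apply: eq_bigr => i _; rewrite ger0_norm. Qed.

Lemma l1_dist x z : `|l1 x - l1 z| <= l1 (x - z).
Proof.
rewrite /l1 -sumrB; apply: le_trans (ler_norm_sum _ _ _) _.
by apply: ler_sum => i _; rewrite !mxE; apply: ler_dist_dist.
Qed.

Lemma max0_subN (a : R) : Num.max a 0 - Num.max (- a) 0 = a.
Proof. by case: (leP a 0); case: (leP (- a) 0) => *; lra. Qed.

Lemma max0_addN (a : R) : Num.max a 0 + Num.max (- a) 0 = `|a|.
Proof.
by case: (leP a 0) => a0; [rewrite ler0_norm | rewrite gtr0_norm]; case: leP => *; lra.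
Qed.

Lemma max0_orN (a : R) : Num.max a 0 = 0 \/ Num.max (- a) 0 = 0.
Proof. by case: (leP a 0) => a0; [left | right; case: leP => *; lra]. Qed.

(* p and q are the normalized positive and negative parts of d. *)
Lemma zero_sum_decomp (d : 'cV[R]_n) : \sum_i d i 0 = 0 -> d != 0 ->
  exists lam p q, [/\ 0 < lam, simplex n p, simplex n q,
    forall i, p i 0 = 0 \/ q i 0 = 0 & d = lam *: (p - q) /\ l1 d = 2 * lam].
Proof.
move=> d_sum0 d_neq0.
have l1_gt0 : 0 < l1 d.
  by rewrite lt_neqAle l1_ge0 andbT eq_sym; apply: contra d_neq0 => /eqP/l1_eq0 ->.
set lam := l1 d / 2.
have lam_gt0 : 0 < lam by rewrite divr_gt0.
have posB : \sum_i Num.max (d i 0) 0 - \sum_i Num.max (- d i 0) 0 = 0.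
  by rewrite -sumrB -[RHS]d_sum0; apply: eq_bigr => i _; rewrite max0_subN.
have posD : \sum_i Num.max (d i 0) 0 + \sum_i Num.max (- d i 0) 0 = l1 d.
  by rewrite /l1 -big_split; apply: eq_bigr => i _; exact: max0_addN.
have pos_sum : \sum_i Num.max (d i 0) 0 = lam by rewrite /lam; lra.
have neg_sum : \sum_i Num.max (- d i 0) 0 = lam by rewrite /lam; lra.
have part_simplex (g : 'I_n -> R) : \sum_i Num.max (g i) 0 = lam ->
    simplex n (\col_i (Num.max (g i) 0 / lam)).
  move=> g_sum; split=> [i|]; first by rewrite mxE divr_ge0 ?le_max ?lexx ?orbT ?ltW.
  by under eq_bigr do rewrite mxE; rewrite -mulr_suml g_sum divff ?gt_eqF.
exists lam, (\col_i (Num.max (d i 0) 0 / lam)), (\col_i (Num.max (- d i 0) 0 / lam)).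
split; [by [] | exact: part_simplex | exact: part_simplex | | split].
- by move=> i; rewrite !mxE; case: (max0_orN (d i 0)) => ->; rewrite mul0r; [left|right].
- apply/matrixP => i k; rewrite (ord1 k) !mxE -mulrBl max0_subN.
  by rewrite mulrCA divff ?mulr1 ?gt_eqF.
- by rewrite /lam; field.
Qed.

Lemma mulmx_sum_col m (A : 'M[R]_(m, n)) x : A *m x = \sum_j x j 0 *: col j A.
Proof.
apply/matrixP => i k; rewrite !mxE summxE; apply: eq_bigr => j _.
by rewrite !mxE (ord1 k) mulrC.
Qed.

End Simplex.

Section Norm.
Variables (R : realType) (m : nat) (N : 'cV[R]_m -> R).
Hypothesis N_norm : is_norm N.
Implicit Types (x y : 'cV[R]_m).

Lemma is_normZ a x : N (a *: x) = `|a| * N x.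
Proof. by case: N_norm. Qed.

Lemma is_normD x y : N (x + y) <= N x + N y.
Proof. by case: N_norm. Qed.

Lemma is_norm_eq0 x : N x = 0 -> x = 0.
Proof. by case: N_norm => _ _; apply. Qed.

Lemma is_norm0 : N 0 = 0.
Proof. by rewrite -(scale0r 0) is_normZ normr0 mul0r. Qed.

Lemma is_normN x : N (- x) = N x.
Proof. by rewrite -scaleN1r is_normZ normrN normr1 mul1r. Qed.

Lemma is_normB x y : N (x - y) = N (y - x).
Proof. by rewrite -is_normN opprB. Qed.

Lemma is_norm_ge0 x : 0 <= N x.
Proof. by have := is_normD x (- x); rewrite subrr is_norm0 is_normN; lra. Qed.

Lemma is_norm_dist x y : `|N x - N y| <= N (x - y).
Proof.
have := is_normD (x - y) y; have := is_normD (y - x) x.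
by rewrite !subrK is_normB ler_norml; lra.
Qed.

Lemma is_norm_sum I (r : seq I) (P : pred I) (F : I -> 'cV[R]_m) :
  N (\sum_(i <- r | P i) F i) <= \sum_(i <- r | P i) N (F i).
Proof.
elim/big_rec2: _ => [|i y1 y2 _ IH]; first by rewrite is_norm0.
by apply: le_trans (is_normD _ _) _; rewrite lerD2l.
Qed.

Variables (n : nat) (A : 'M[R]_(m, n)).
Implicit Types (p q d : 'cV[R]_n).

Lemma norm_mulmx_le_sum d : N (A *m d) <= \sum_j `|d j 0| * N (col j A).
Proof.
rewrite mulmx_sum_col; apply: le_trans (is_norm_sum _ _ _) _.
by apply: ler_sum => j _; rewrite is_normZ.
Qed.

Lemma diam_ge0 : 0 <= diam N A.
Proof. by apply/bigmax_geP; left. Qed.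

Lemma norm_colB_le_diam i j : N (col i A - col j A) <= diam N A.
Proof. by apply/bigmax_geP; right; exists i => //; apply/bigmax_geP; right; exists j. Qed.

Lemma norm_mulmx_simplexB_le_diam p q : simplex n p -> simplex n q ->
  N (A *m p - A *m q) <= diam N A.
Proof.
move=> [p0 p1] [q0 q1].
have -> : A *m p - A *m q = \sum_j \sum_k (p j 0 * q k 0) *: (col j A - col k A).
  transitivity (\sum_j \sum_k (p j 0 * q k 0) *: col j A
                 - \sum_j \sum_k (p j 0 * q k 0) *: col k A); last first.
    by rewrite -sumrB; apply: eq_bigr => j _; rewrite -sumrB; apply: eq_bigr => k _; rewrite scalerBr.
  rewrite [X in _ = _ - X]exchange_big /= !mulmx_sum_col; congr (_ - _); apply: eq_bigr => j _.
    by rewrite -scaler_suml -mulr_sumr q1 mulr1.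
  by rewrite -scaler_suml -mulr_suml p1 mul1r.
apply: le_trans (is_norm_sum _ _ _) _.
apply: (@le_trans _ _ (\sum_j \sum_k p j 0 * q k 0 * diam N A)).
  apply: ler_sum => j _; apply: le_trans (is_norm_sum _ _ _) _.
  apply: ler_sum => k _; rewrite is_normZ ger0_norm ?mulr_ge0 //.
  by apply: ler_wpM2l; [rewrite mulr_ge0 | exact: norm_colB_le_diam].
under eq_bigr do rewrite -mulr_suml -mulr_sumr q1 mulr1.
by rewrite -mulr_suml p1 mul1r.
Qed.

Lemma norm_mulmx_zero_sum_le d : \sum_i d i 0 = 0 -> N (A *m d) <= l1 d * diam N A / 2.
Proof.
move=> d_sum0; have [->|d_neq0] := eqVneq d 0.
  by rewrite mulmx0 is_norm0 divr_ge0 ?mulr_ge0 ?l1_ge0 ?diam_ge0.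
have [lam [p [q [lam_gt0 sp sq _ [-> ->]]]]] := zero_sum_decomp d_sum0 d_neq0.
rewrite -scalemxAr is_normZ mulmxBr gtr0_norm // (_ : 2 * lam * _ / 2 = lam * diam N A); last by field.
by apply: ler_wpM2l; [exact: ltW | exact: norm_mulmx_simplexB_le_diam].
Qed.

End Norm.

Section RowTopology.
Variables (R : realType) (n : nat).
Implicit Types (r : 'rV[R]_n).

Lemma lipschitz_continuous (f : 'rV[R]_n -> R) (C : R) :
  (forall a b, `|f a - f b| <= C * `|a - b|) -> continuous f.
Proof.
move=> f_lip x B /= /(nbhs_ballP (f x)) [e /= e_gt0 eB].
have C1_gt0 : 0 < `|C| + 1 by rewrite ltr_wpDl.
apply/nbhs_ballP; exists (e / (`|C| + 1)); first by rewrite /= divr_gt0.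
move=> y; rewrite -!ball_normE /= => xy; apply: eB; rewrite -ball_normE /=.
apply: le_lt_trans (f_lip _ _) _.
apply: (@le_lt_trans _ _ ((`|C| + 1) * `|x - y|)).
  by apply: ler_wpM2r => //; rewrite (le_trans (ler_norm C)) // lerDl.
by rewrite mulrC -ltr_pdivlMr.
Qed.

Lemma row_coord_le_norm r i : `|r 0 i| <= `|r|.
Proof. by rewrite [leRHS]/Num.norm /= mx_normrE; apply/bigmax_geP; right; exists (0, i). Qed.

Lemma continuous_row_dot (c : 'I_n -> R) : continuous (fun r => \sum_i c i * r 0 i).
Proof.
apply: (@lipschitz_continuous _ (\sum_i `|c i|)) => a b.
rewrite -sumrB mulr_suml; apply: le_trans (ler_norm_sum _ _ _) _.
apply: ler_sum => i _; rewrite -mulrBr normrM ler_wpM2l //.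
by rewrite (_ : a 0 i - b 0 i = (a - b) 0 i) ?row_coord_le_norm // !mxE.
Qed.

Lemma closed_row_dot_eq (c : 'I_n -> R) b : closed [set r : 'rV[R]_n | \sum_i c i * r 0 i = b].
Proof.
apply: (@preimage_closed _ _ (fun r => \sum_i c i * r 0 i) [set x | x = b]).
  by move=> r _; apply: continuous_row_dot.
exact: closed_eq.
Qed.

Lemma closed_row_coord_ge0 i : closed [set r : 'rV[R]_n | 0 <= r 0 i].
Proof.
apply: (@preimage_closed _ _ (fun r => r 0 i) [set x | 0 <= x]); last exact: closed_ge.
by move=> r _; apply: coord_continuous.
Qed.

Lemma closed_row_coord_le0 i : closed [set r : 'rV[R]_n | r 0 i <= 0].
Proof.
apply: (@preimage_closed _ _ (fun r => r 0 i) [set x | x <= 0]); last exact: closed_le.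
by move=> r _; apply: coord_continuous.
Qed.

Lemma row_closed_bounded_argmin (K : set 'rV[R]_n) (B : R) (f : 'rV[R]_n -> R) :
  K !=set0 -> closed K -> (forall r, K r -> forall i, `|r 0 i| <= B) ->
  continuous f -> exists2 r, K r & forall r', K r' -> f r <= f r'.
Proof.
move=> K0 K_closed K_bounded f_cont.
have K_compact : compact K.
  apply: bounded_closed_compact => //.
  apply: filterS (@nbhs_pinfty_ge R (Num.max B 0) (num_real _)) => M BM r Kr /=.
  rewrite [leLHS]/Num.norm /= mx_normrE.
  apply/bigmax_leP; split => [|[i j] _ /=]; first by apply: le_trans BM; rewrite le_max lexx orbT.
  rewrite (ord1 i); apply: le_trans (K_bounded _ Kr j) _.
  by apply: le_trans BM; rewrite le_max lexx.
have [r Kr r_min] := compact_EVT_min K0 K_compact (continuous_subspaceT f_cont).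
by exists r => [|r' Kr']; [rewrite inE in Kr | apply: r_min; rewrite inE].
Qed.

End RowTopology.

Section ConvexHull.
Variables (R : realType) (m n : nat) (A : 'M[R]_(m, n)).
Local Notation conv := (conv_cols A).

Lemma conv_col j : conv (col j A).
Proof. by exists (delta_mx j 0); [exact: simplex_delta | rewrite colE]. Qed.

Lemma conv_comb3 a b c (al be ga : R) : conv a -> conv b -> conv c ->
  0 <= al -> 0 <= be -> 0 <= ga -> al + be + ga = 1 ->
  conv (al *: a + be *: b + ga *: c).
Proof.
move=> [pa [pa0 pa1] <-] [pb [pb0 pb1] <-] [pc [pc0 pc1] <-] al0 be0 ga0 sum1.
exists (al *: pa + be *: pb + ga *: pc); last by rewrite !mulmxDr !scalemxAr.
split=> [i|]; first by rewrite !mxE !addr_ge0 ?mulr_ge0.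
by rewrite !sum_coordD !sum_coordZ pa1 pb1 pc1 !mulr1.
Qed.

Lemma conv_comb2 a b (t : R) : conv a -> conv b -> 0 <= t <= 1 ->
  conv (t *: a + (1 - t) *: b).
Proof.
move=> ca cb /andP [t0 t1].
rewrite -[X in conv X]addr0 -(scale0r a).
by apply: conv_comb3; rewrite ?subr_ge0 // addr0 addrC subrK.
Qed.

End ConvexHull.

Section Nearest.
Variables (R : realType) (m n : nat) (A : 'M[R]_(m, n)).
Implicit Types (x z : 'cV[R]_n) (u : 'cV[R]_m).

Lemma closed_Zset_tr u : closed [set r : 'rV[R]_n | Zset A u r^T].
Proof.
have -> : [set r : 'rV[R]_n | Zset A u r^T] =
    \bigcap_(i in setT) [set r | 0 <= r 0 i] `&` [set r | \sum_i 1 * r 0 i = 1]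
    `&` \bigcap_(k in setT) [set r | \sum_i A k i * r 0 i = u k 0].
  apply/seteqP; split => r /=.
    move=> [[r0 r1] Ar]; split; first split.
    - by move=> i _; have := r0 i; rewrite mxE.
    - by rewrite -[RHS]r1; apply: eq_bigr => i _; rewrite mxE mul1r.
    - by move=> k _; rewrite -Ar mxE; apply: eq_bigr => i _; rewrite mxE.
  move=> [[r0 r1] Ar]; split; first split.
  - by move=> i; rewrite mxE; apply: r0.
  - by rewrite -[RHS]r1; apply: eq_bigr => i _; rewrite mxE mul1r.
  - apply/matrixP => k l; rewrite (ord1 l) -(Ar k I) mxE.
    by apply: eq_bigr => i _; rewrite mxE.
apply: closedI; first apply: closedI.
- by apply: closed_bigI => i _; apply: closed_row_coord_ge0.
- exact: closed_row_dot_eq.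
- by apply: closed_bigI => k _; apply: closed_row_dot_eq.
Qed.

Lemma l1_tr_le (r : 'rV[R]_n) : l1 r^T <= n%:R * `|r|.
Proof.
apply: (@le_trans _ _ (\sum_(i < n) `|r|)).
  by apply: ler_sum => i _; rewrite mxE row_coord_le_norm.
by rewrite sumr_const card_ord mulr_natl.
Qed.

Lemma Zset_nearest u x : conv_cols A u ->
  exists2 z, Zset A u z & forall z', Zset A u z' -> l1 (x - z) <= l1 (x - z').
Proof.
move=> [z0 sz0 Az0].
have K0 : [set r : 'rV[R]_n | Zset A u r^T] !=set0 by exists z0^T; rewrite /= trmxK.
have K_bounded r : Zset A u r^T -> forall i, `|r 0 i| <= 1.
  move=> [sr _] i; have := simplex_coord_le1 i sr; rewrite mxE => /andP [ri0 ri1].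
  by rewrite ger0_norm.
have dist_cont : continuous (fun r : 'rV[R]_n => l1 (x - r^T)).
  apply: (@lipschitz_continuous _ _ _ n%:R) => a b.
  apply: le_trans (l1_dist _ _) _; rewrite distrC.
  have -> : x - a^T - (x - b^T) = (b - a)^T by apply/matrixP => i j; rewrite !mxE; ring.
  exact: l1_tr_le.
have [r Kr r_min] := row_closed_bounded_argmin K0 (closed_Zset_tr (u := u)) K_bounded dist_cont.
exists r^T => // z' Zz'; have := r_min z'^T; rewrite trmxK; apply; by rewrite /= trmxK.
Qed.

Lemma distZ_nearest u x z : Zset A u z ->
  (forall z', Zset A u z' -> l1 (x - z) <= l1 (x - z')) -> distZ A x u = l1 (x - z).
Proof.
move=> Zz z_min; apply/le_anti/andP; split.
  by apply: ge_inf; [exists 0 => _ [w _ <-]; apply: l1_ge0 | exists z].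
by apply: lb_le_inf; [exists (l1 (x - z)), z | move=> _ [w Zw <-]; apply: z_min].
Qed.

End Nearest.

Section MinimalFace.
Variables (R : realType) (m n : nat) (A : 'M[R]_(m, n)).
Local Notation conv := (conv_cols A).

(* The smallest face of conv(A) containing y: the points v of conv(A) such that
   the segment from v through y can be prolonged beyond y inside conv(A). *)
Definition minface (y : 'cV[R]_m) : set 'cV[R]_m :=
  [set v | conv v /\ exists2 s : R, 0 < s & conv (y + s *: (y - v))].

Lemma minface_self y : conv y -> minface y y.
Proof. by move=> cy; split => //; exists 1 => //; rewrite subrr scaler0 addr0. Qed.

Lemma minface_combl y a b (t : R) : conv y -> conv a -> conv b -> 0 < t < 1 ->
  minface y (t *: a + (1 - t) *: b) -> minface y a.
Proof.
move=> cy ca cb /andP [t_gt0 t_lt1] [_ [s s_gt0 cw]]; split => //.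
have s1_gt0 : 0 < 1 + s by rewrite addr_gt0.
exists (t * s / (1 + s)); first by rewrite !divr_gt0 ?mulr_gt0.
have -> : y + t * s / (1 + s) *: (y - a) =
    (s * t / (1 + s)) *: y + (1 / (1 + s)) *: (y + s *: (y - (t *: a + (1 - t) *: b)))
    + (s * (1 - t) / (1 + s)) *: b.
  by apply/matrixP => i k; rewrite !mxE; field; rewrite gt_eqF.
apply: conv_comb3 => //; rewrite ?divr_ge0 ?mulr_ge0 ?subr_ge0 ?ltW //.
by field; rewrite gt_eqF.
Qed.

Lemma conv_prolong_le y v (s s' : R) : conv y -> 0 < s' <= s ->
  conv (y + s *: (y - v)) -> conv (y + s' *: (y - v)).
Proof.
move=> cy /andP [s'_gt0 s'_le] cw; have s_gt0 := lt_le_trans s'_gt0 s'_le.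
have -> : y + s' *: (y - v) = (s' / s) *: (y + s *: (y - v)) + (1 - s' / s) *: y.
  by apply/matrixP => i k; rewrite !mxE; field; rewrite gt_eqF.
apply: conv_comb2 => //; apply/andP; split; first by rewrite divr_ge0 ?ltW.
by rewrite ler_pdivrMr // mul1r.
Qed.

Lemma minface_face y : conv y -> is_face conv (minface y).
Proof.
move=> cy; split; first by move=> v [].
- move=> v1 v2 t [c1 [s1 s1_gt0 w1]] [c2 [s2 s2_gt0 w2]] t01.
  split; first exact: conv_comb2.
  exists (Num.min s1 s2); first by rewrite lt_min s1_gt0 s2_gt0.
  have w1' : conv (y + Num.min s1 s2 *: (y - v1)).
    by apply: conv_prolong_le cy _ w1; rewrite lt_min s1_gt0 s2_gt0 ge_min lexx.
  have w2' : conv (y + Num.min s1 s2 *: (y - v2)).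
    by apply: conv_prolong_le cy _ w2; rewrite lt_min s1_gt0 s2_gt0 ge_min lexx orbT.
  have -> : y + Num.min s1 s2 *: (y - (t *: v1 + (1 - t) *: v2)) =
      t *: (y + Num.min s1 s2 *: (y - v1)) + (1 - t) *: (y + Num.min s1 s2 *: (y - v2)).
    by apply/matrixP => i k; rewrite !mxE; ring.
  exact: conv_comb2.
- move=> a b t ca cb t01 Fab; split; first exact: minface_combl Fab.
  apply: (@minface_combl y b a (1 - t)) => //.
    by move: t01 => /andP [t_gt0 t_lt1]; rewrite subr_gt0 t_lt1 ltrBlDr ltrDl t_gt0.
  suff -> : (1 - t) *: b + (1 - (1 - t)) *: a = t *: a + (1 - t) *: b by [].
  by apply/matrixP => i k; rewrite !mxE; ring.
Qed.

End MinimalFace.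

Section Improvement.
Variables (R : realType) (m n : nat) (A : 'M[R]_(m, n)).
Variables (u : 'cV[R]_m) (x z p q : 'cV[R]_n) (lam : R).
Hypotheses (sx : simplex n x) (Zz : Zset A u z) (lam_gt0 : 0 < lam)
  (sp : simplex n p) (sq : simplex n q) (pq_disj : forall i, p i 0 = 0 \/ q i 0 = 0)
  (xz_eq : x - z = lam *: (p - q)).
Variables (j : 'I_n) (s : R) (r : 'cV[R]_n).
Hypotheses (pj_gt0 : 0 < p j 0) (s_gt0 : 0 < s) (sr : simplex n r)
  (Ar : A *m r = A *m q + s *: (A *m q - col j A)).

Let tau := lam * p j 0 / (1 + s).

Let tau_gt0 : 0 < tau.
Proof. by rewrite divr_gt0 ?mulr_gt0 ?addr_gt0. Qed.

Let tau_mul : tau * (1 + s) = lam * p j 0.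
Proof. by rewrite divfK // gt_eqF // addr_gt0. Qed.

Let lam_pj_le : lam * p j 0 <= lam.
Proof. by rewrite -[leRHS]mulr1 ler_pM2l //; case/andP: (simplex_coord_le1 j sp). Qed.

Let lam_q_le_z i : lam * q i 0 <= z i 0.
Proof.
have := congr1 (fun M : 'cV[R]_n => M i 0) xz_eq; rewrite !mxE => xz_i.
have [x_ge0 z_ge0] := (sx.1 i, Zz.1.1 i).
by case: (pq_disj i) => [pi0|->]; [rewrite pi0 in xz_i; lra | rewrite mulr0].
Qed.

(* The direction s e_j + r - (1 + s) q lies in the kernel of A and has zero sum. *)
Let z' := z + tau *: (s *: delta_mx j 0 + r - (1 + s) *: q).

Let z'_Zset : Zset A u z'.
Proof.
have [[z_ge0 z_sum] Az] := Zz.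
split; last first.
  rewrite /z' mulmxDr -scalemxAr !mulmxDr mulmxN -!scalemxAr Ar -colE Az.
  suff -> : s *: col j A + (A *m q + s *: (A *m q - col j A)) - (1 + s) *: (A *m q) = 0.
    by rewrite scaler0 addr0.
  by apply/matrixP => i k; rewrite !mxE; ring.
split=> [i|].
  have -> : z' i 0 = (z i 0 - tau * (1 + s) * q i 0)
                     + tau * (s * (delta_mx j 0 : 'cV[R]_n) i 0 + r i 0).
    by rewrite /z' !mxE; ring.
  have e_ge0 : 0 <= (delta_mx j 0 : 'cV[R]_n) i 0 by rewrite mxE ler0n.
  apply: addr_ge0.
    rewrite subr_ge0 tau_mul; apply: le_trans (lam_q_le_z i).
    by apply: ler_wpM2r; [exact: sq.1 | exact: lam_pj_le].
  by apply: mulr_ge0; [exact: ltW | apply: addr_ge0; [apply: mulr_ge0; [exact: ltW|] | exact: sr.1]].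
rewrite sum_coordD sum_coordZ sum_coordB sum_coordD !sum_coordZ z_sum sr.2 sq.2.
by rewrite (simplex_delta R j).2; ring.
Qed.

Let x_z'_l1_lt : l1 (x - z') < 2 * lam.
Proof.
(* x - z' is a difference of two nonnegative vectors of total mass 2 lam - 2 tau s. *)
have -> : x - z' = (lam *: p - (tau * s) *: delta_mx j 0)
                   - ((lam - tau * (1 + s)) *: q + tau *: r).
  rewrite /z' opprD addrA xz_eq; apply/matrixP => i k; rewrite !mxE; ring.
have P_ge0 i : 0 <= (lam *: p - (tau * s) *: delta_mx j 0) i 0.
  rewrite !mxE; have [->|ij] := eqVneq i j.
    by rewrite eqxx mulr1 subr_ge0 -tau_mul ler_pM2l // lerDr.
  by rewrite /= mulr0 subr0; apply: mulr_ge0; [exact: ltW | exact: sp.1].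
have Q_ge0 i : 0 <= ((lam - tau * (1 + s)) *: q + tau *: r) i 0.
  have coef_ge0 : 0 <= lam - tau * (1 + s) by rewrite tau_mul subr_ge0.
  by rewrite !mxE addr_ge0 // mulr_ge0 //; [exact: sq.1 | exact: ltW | exact: sr.1].
apply: le_lt_trans (l1_subr_le _ _) _; rewrite !l1_nonneg //.
rewrite sum_coordB sum_coordD !sum_coordZ sp.2 sq.2 sr.2 (simplex_delta R j).2.
have : 0 < tau * s by rewrite mulr_gt0.
lra.
Qed.

Lemma exists_closer_Zset : exists2 z', Zset A u z' & l1 (x - z') < 2 * lam.
Proof. by exists z'. Qed.

End Improvement.

Lemma nearest_minface_supp (R : realType) m n (A : 'M[R]_(m, n)) u x z p q (lam : R) :
  simplex n x -> Zset A u z -> (forall z', Zset A u z' -> l1 (x - z) <= l1 (x - z')) ->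
  0 < lam -> simplex n p -> simplex n q -> (forall i, p i 0 = 0 \/ q i 0 = 0) ->
  x - z = lam *: (p - q) -> l1 (x - z) = 2 * lam ->
  forall j, minface A (A *m q) (col j A) -> p j 0 = 0.
Proof.
move=> sx Zz z_min lam_gt0 sp sq pq_disj xz_eq l1_xz j [_ [s s_gt0 [r sr Ar]]].
apply/eqP; apply: contraT => pj_neq0.
have pj_gt0 : 0 < p j 0 by rewrite lt_neqAle eq_sym pj_neq0 sp.1.
have [z' Zz' z'_lt] :=
  exists_closer_Zset sx Zz lam_gt0 sp sq pq_disj xz_eq pj_gt0 s_gt0 sr Ar.
by have := z_min _ Zz'; rewrite l1_xz; lra.
Qed.

Section FacialDistance.
Variables (R : realType) (m n : nat) (N : 'cV[R]_m -> R) (A : 'M[R]_(m, n)).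
Hypothesis N_norm : is_norm N.
Implicit Types (F G : set 'cV[R]_m) (u : 'cV[R]_m) (x : 'cV[R]_n).

Lemma set_dist_ge0 F G : 0 <= set_dist N F G.
Proof. by apply: inf_nonneg => _ [a [b [_ _ ->]]]; apply: is_norm_ge0. Qed.

Lemma set_dist_le F G a b : F a -> G b -> set_dist N F G <= N (a - b).
Proof.
move=> Fa Gb; apply: inf_le_nonneg; last by exists a, b.
by move=> _ [c [d [_ _ ->]]]; apply: is_norm_ge0.
Qed.

Lemma facial_dist_ge0 : 0 <= facial_dist N A.
Proof. by apply: inf_nonneg => _ [F [_ _ _ ->]]; apply: set_dist_ge0. Qed.

Lemma facial_dist_le F : is_face (conv_cols A) F -> F <> set0 -> F <> conv_cols A ->
  facial_dist N A <= set_dist N F (conv_out A F).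
Proof.
move=> F_face F_neq0 F_neqT; apply: inf_le_nonneg; last by exists F.
by move=> _ [G [_ _ _ ->]]; apply: set_dist_ge0.
Qed.

Lemma distZ_gt0 u x : conv_cols A u -> simplex n x -> ~ Zset A u x -> 0 < distZ A x u.
Proof.
move=> cu sx xZ; have [z Zz z_min] := Zset_nearest x cu.
rewrite (distZ_nearest Zz z_min) lt_neqAle l1_ge0 andbT eq_sym.
by apply/eqP => /l1_eq0/eqP; rewrite subr_eq0 => /eqP xz; apply: xZ; rewrite xz.
Qed.

Lemma norm_mulmx_subr_le_distZ u x : conv_cols A u -> simplex n x ->
  N (A *m x - u) <= distZ A x u * diam N A / 2.
Proof.
move=> cu sx; have [z [sz <-] z_min] := Zset_nearest x cu.
rewrite (distZ_nearest (conj sz erefl) z_min) -mulmxBr.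
by apply: norm_mulmx_zero_sum_le => //; apply: sum_coord_simplexB.
Qed.

Lemma facial_dist_distZ_le u x : conv_cols A u -> simplex n x ->
  facial_dist N A * distZ A x u <= 2 * N (A *m x - u).
Proof.
move=> cu sx; have [z Zz z_min] := Zset_nearest x cu; have [sz Az] := Zz.
rewrite (distZ_nearest Zz z_min).
have [xz0|xz_neq0] := eqVneq (x - z) 0.
  have -> : l1 (x - z) = 0 by rewrite xz0; apply: big1 => i _; rewrite mxE normr0.
  by rewrite mulr0 mulr_ge0 ?(is_norm_ge0 N_norm).
have [lam [p [q [lam_gt0 sp sq pq_disj [xz_eq l1_xz]]]]] :=
  zero_sum_decomp (sum_coord_simplexB sx sz) xz_neq0.
pose F := minface A (A *m q).
have p_out := nearest_minface_supp sx Zz z_min lam_gt0 sp sq pq_disj xz_eq l1_xz.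
have F_Aq : F (A *m q) by apply: minface_self; exists q.
have F_neqT : F <> conv_cols A.
  have [j pj_neq0] := simplex_neq0 sp.
  by move=> FE; move: pj_neq0; rewrite p_out ?eqxx // -/F FE; apply: conv_col.
have Phi_le : facial_dist N A <= N (A *m q - A *m p).
  apply: le_trans (set_dist_le F_Aq (_ : conv_out A F (A *m p))); last by exists p.
  apply: facial_dist_le F_neqT; first by apply: minface_face; exists q.
  by move=> F0; rewrite F0 in F_Aq.
have -> : A *m x - u = lam *: (A *m p - A *m q).
  by rewrite -Az -mulmxBr xz_eq -scalemxAr mulmxBr.
by rewrite (is_normZ N_norm) gtr0_norm // l1_xz (is_normB N_norm); nra.
Qed.

End FacialDistance.

Section FaceColumns.
Variables (R : realType) (m n : nat) (A : 'M[R]_(m, n)).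
Local Notation conv := (conv_cols A).
Implicit Types (F : set 'cV[R]_m) (p q : 'cV[R]_n).

Lemma simplex_split_col p j : simplex n p -> p j 0 < 1 ->
  exists2 r, simplex n r & [/\ r j 0 = 0, forall i, p i 0 = 0 -> r i 0 = 0 &
    A *m p = p j 0 *: col j A + (1 - p j 0) *: (A *m r)].
Proof.
move=> sp pj_lt1; have pj_neq1 : 1 - p j 0 != 0 by rewrite subr_eq0 eq_sym lt_eqF.
pose r := (1 - p j 0)^-1 *: (p - p j 0 *: delta_mx j 0).
have rj0 : r j 0 = 0 by rewrite !mxE !eqxx mulr1 subrr mulr0.
have r_coord i : i != j -> r i 0 = (1 - p j 0)^-1 * p i 0.
  by move=> ij; rewrite !mxE (negbTE ij) mulr0 subr0.
have inv_ge0 : 0 <= (1 - p j 0)^-1 by rewrite invr_ge0 subr_ge0 ltW.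
exists r; last split => //.
- split=> [i|]; last first.
    by rewrite sum_coordZ sum_coordB sum_coordZ sp.2 (simplex_delta R j).2 mulr1 mulVf.
  have [->|ij] := eqVneq i j; first by rewrite rj0.
  by rewrite r_coord // mulr_ge0 // sp.1.
- move=> i pi0; have [->|ij] := eqVneq i j; first by rewrite rj0.
  by rewrite r_coord // pi0 mulr0.
- rewrite /r -scalemxAr scalerA mulfV // scale1r mulmxBr -scalemxAr -colE.
  by rewrite addrC subrK.
Qed.

Lemma convex_mulmx_simplex F p : convex_subset F -> simplex n p ->
  (forall j, p j 0 != 0 -> F (col j A)) -> F (A *m p).
Proof.
move=> F_convex; suff F_supp k : forall p, leq #|[set j | p j 0 != 0]%SET| k ->
    simplex n p -> (forall j, p j 0 != 0 -> F (col j A)) -> F (A *m p).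
  exact: F_supp.
elim: k => [|k IH] {}p supp_le sp F_cols; have [j pj_neq0] := simplex_neq0 sp.
  by move: supp_le; rewrite (cardsD1 j) inE pj_neq0.
have /andP [pj_ge0 pj_le1] := simplex_coord_le1 j sp.
move: pj_le1; rewrite le_eqVlt => /orP [/eqP pj1|pj_lt1].
  by rewrite (simplex_eq_delta sp pj1) -colE; apply: F_cols; rewrite pj1 oner_eq0.
have [r sr [rj0 r_supp ->]] := simplex_split_col sp pj_lt1.
apply: F_convex; [exact: F_cols | | by rewrite pj_ge0 ltW].
apply: (IH r _ sr) => [|i ri_neq0].
  have r_sub : ([set i | r i 0 != 0] \subset [set i | p i 0 != 0] :\ j)%SET.
    apply/fintype.subsetP => i; rewrite !inE => ri_neq0; apply/andP; split.
      by apply: contra ri_neq0 => /eqP ->; rewrite rj0.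
    by apply: contra ri_neq0 => /eqP /r_supp ->.
  rewrite -ltnS; apply: leq_ltn_trans (subset_leq_card r_sub) _.
  by move: supp_le; rewrite (cardsD1 j) inE pj_neq0.
by apply: F_cols; apply: contra ri_neq0 => /eqP /r_supp ->.
Qed.

Lemma face_col_supp F p j : is_face conv F -> simplex n p -> F (A *m p) ->
  p j 0 != 0 -> F (col j A).
Proof.
move=> [_ _ F_ext] sp Fp pj_neq0.
have /andP [pj_ge0 pj_le1] := simplex_coord_le1 j sp.
move: pj_le1; rewrite le_eqVlt => /orP [/eqP pj1|pj_lt1].
  by move: Fp; rewrite (simplex_eq_delta sp pj1) -colE.
have [r sr [_ _ Ap]] := simplex_split_col sp pj_lt1.
have pj_gt0 : 0 < p j 0 by rewrite lt_neqAle eq_sym pj_neq0.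
by rewrite Ap in Fp; case: (F_ext _ _ _ (conv_col A j) _ _ Fp) => //; [exists r | rewrite pj_gt0].
Qed.

Definition subsimplex (S : {set 'I_n}) : set 'cV[R]_n :=
  [set p | simplex n p /\ forall i, i \notin S -> p i 0 = 0].

Definition face_cols F : {set 'I_n} := [set j | `[< F (col j A) >]]%SET.

Lemma face_colsP F j : reflect (F (col j A)) (j \in face_cols F).
Proof. by rewrite inE; apply: asboolP. Qed.

Lemma face_mulmxP F p : is_face conv F -> simplex n p ->
  F (A *m p) <-> subsimplex (face_cols F) p.
Proof.
move=> F_face sp; split=> [Fp|[_ p_out]].
  split=> // i i_out; apply/eqP; apply: contraNT i_out => pi_neq0.
  by apply/face_colsP; apply: face_col_supp F_face sp Fp pi_neq0.
have [_ F_convex _] := F_face; apply: convex_mulmx_simplex F_convex sp _ => j pj_neq0.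
by apply/face_colsP; apply: contraR pj_neq0 => /p_out ->.
Qed.

Lemma face_subsimplex_disjoint F p q : is_face conv F ->
  subsimplex (face_cols F) p -> subsimplex (~: face_cols F) q -> A *m p != A *m q.
Proof.
move=> F_face Sp [sq q_out]; apply/eqP => Apq.
have Fq : F (A *m q) by rewrite -Apq; apply/(face_mulmxP F_face Sp.1).
have [_ q_in] := (face_mulmxP F_face sq).1 Fq.
have [i qi_neq0] := simplex_neq0 sq.
have iS : i \in face_cols F by apply: contraNT qi_neq0 => /q_in ->.
by move: qi_neq0; rewrite q_out ?eqxx // inE negbK.
Qed.

End FaceColumns.

Lemma fin_pos_uniform (R : realType) (T : finType) (Q : T -> R -> Prop) :
  (forall t c c', 0 < c' <= c -> Q t c -> Q t c') ->
  (forall t, exists2 c, 0 < c & Q t c) -> exists2 c, 0 < c & forall t, Q t c.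
Proof.
move=> Q_mono Q_ex.
suff [c c_gt0 Qc] : exists2 c, 0 < c & forall t, t \in enum T -> Q t c.
  by exists c => // t; apply: Qc; rewrite mem_enum.
elim: (enum T) => [|a s [c c_gt0 Qc]]; first by exists 1.
have [d d_gt0 Qd] := Q_ex a.
have cd_gt0 : 0 < Num.min c d by rewrite lt_min c_gt0 d_gt0.
exists (Num.min c d) => // t; rewrite inE => /orP [/eqP ->|ts].
  by apply: Q_mono Qd; rewrite cd_gt0 ge_min lexx orbT.
by apply: Q_mono (Qc _ ts); rewrite cd_gt0 ge_min lexx.
Qed.

Section Separation.
Variables (R : realType) (m n : nat) (N : 'cV[R]_m -> R) (A : 'M[R]_(m, n)).
Hypothesis N_norm : is_norm N.
Implicit Types (S : {set 'I_n}) (p q : 'cV[R]_n) (r : 'rV[R]_n).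

(* The vectors (p - q)^T with p in subsimplex S and q in subsimplex (~: S), described
   by closed conditions so that N (A *m (p - q)) attains its minimum there. *)
Definition signed_simplex S : set 'rV[R]_n :=
  [set r | [/\ forall i, (if i \in S then 0 <= r 0 i else r 0 i <= 0),
              \sum_i (if i \in S then 1 else 0) * r 0 i = 1 &
              \sum_i (if i \in S then 0 else -1) * r 0 i = 1]].

Lemma closed_signed_simplex S : closed (signed_simplex S).
Proof.
have -> : signed_simplex S =
    \bigcap_(i in setT) [set r | if i \in S then 0 <= r 0 i else r 0 i <= 0]
    `&` [set r | \sum_i (if i \in S then 1 else 0) * r 0 i = 1]
    `&` [set r | \sum_i (if i \in S then 0 else -1) * r 0 i = 1].
  apply/seteqP; split => r /=.
    move=> [r_sign r1 r2]; split=> //; split=> // i _; exact: (r_sign i).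
  by move=> [[r_sign r1] r2]; split => // i; exact: (r_sign i I).
apply: closedI; first apply: closedI; try exact: closed_row_dot_eq.
apply: closed_bigI => i _ /=.
by case: (i \in S); [apply: closed_row_coord_ge0 | apply: closed_row_coord_le0].
Qed.

Lemma subsimplexB_signed S p q : subsimplex S p -> subsimplex (~: S) q ->
  signed_simplex S (p - q)^T.
Proof.
move=> [sp p_out] [sq q_out].
have q_in i : i \in S -> q i 0 = 0 by move=> iS; apply: q_out; rewrite inE negbK.
have coord i : (p - q)^T 0 i = p i 0 - q i 0 by rewrite !mxE.
split=> [i||].
- rewrite coord; case: ifP => iS; first by rewrite q_in // subr0; exact: sp.1.
  by rewrite p_out ?iS // sub0r oppr_le0; exact: sq.1.
- rewrite -[RHS]sp.2; apply: eq_bigr => i _; rewrite coord.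
  by case: ifP => iS; [rewrite q_in // subr0 mul1r | rewrite p_out ?iS // mul0r].
- rewrite -[RHS]sq.2; apply: eq_bigr => i _; rewrite coord.
  by case: ifP => iS; [rewrite q_in // subr0 mul0r | rewrite p_out ?iS // sub0r mulN1r opprK].
Qed.

Lemma signed_simplex_split S r : signed_simplex S r ->
  exists p q, [/\ subsimplex S p, subsimplex (~: S) q & r^T = p - q].
Proof.
move=> [r_sign r1 r2].
exists (\col_i (if i \in S then r 0 i else 0)), (\col_i (if i \in S then 0 else - r 0 i)).
split.
- split=> [|i /negbTE iS]; last by rewrite mxE iS.
  split=> [i|]; first by rewrite mxE; have := r_sign i; case: ifP.
  by rewrite -r1; apply: eq_bigr => i _; rewrite mxE; case: ifP; rewrite ?mul1r ?mul0r.
- split=> [|i]; last by rewrite inE negbK mxE => ->.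
  split=> [i|]; first by rewrite mxE; have := r_sign i; case: ifP => // _; rewrite oppr_ge0.
  by rewrite -r2; apply: eq_bigr => i _; rewrite mxE; case: ifP; rewrite ?mul0r ?mulN1r.
- apply/matrixP => i k; rewrite (ord1 k) !mxE.
  by case: ifP; rewrite ?subr0 ?sub0r ?opprK.
Qed.

Lemma signed_simplex_coord_le1 S r : signed_simplex S r -> forall i, `|r 0 i| <= 1.
Proof.
move=> /signed_simplex_split [p [q [[sp p_out] [sq q_out] rpq]]] i.
have -> : r 0 i = p i 0 - q i 0 by rewrite -[r]trmxK rpq !mxE.
have [iS|iS] := boolP (i \in S).
  rewrite q_out ?inE ?iS // subr0 ger0_norm ?sp.1 //.
  by case/andP: (simplex_coord_le1 i sp).
rewrite p_out // sub0r normrN ger0_norm ?sq.1 //.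
by case/andP: (simplex_coord_le1 i sq).
Qed.

Lemma continuous_norm_mulmx_tr : continuous (fun r => N (A *m r^T)).
Proof.
apply: (@lipschitz_continuous _ _ _ (\sum_j N (col j A))) => a b.
apply: le_trans (is_norm_dist N_norm _ _) _; rewrite -mulmxBr -linearB /=.
apply: le_trans (norm_mulmx_le_sum N_norm _ _) _; rewrite mulr_suml.
apply: ler_sum => j _; rewrite mulrC ler_wpM2l ?(is_norm_ge0 N_norm) //.
by rewrite mxE row_coord_le_norm.
Qed.

Lemma subsimplex_sep_pos S :
  (forall p q, subsimplex S p -> subsimplex (~: S) q -> A *m p != A *m q) ->
  exists2 c, 0 < c & forall p q, subsimplex S p -> subsimplex (~: S) q ->
    c <= N (A *m p - A *m q).
Proof.
move=> S_disj.
have [[p0 [q0 [Sp0 Sq0]]]|none] :=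
  pselect (exists p q, subsimplex S p /\ subsimplex (~: S) q); last first.
  by exists 1 => // p q Sp Sq; exfalso; apply: none; exists p, q.
have K0 : signed_simplex S !=set0 by exists (p0 - q0)^T; apply: subsimplexB_signed.
have [r Kr r_min] := row_closed_bounded_argmin K0 (closed_signed_simplex (S := S))
  (@signed_simplex_coord_le1 S) continuous_norm_mulmx_tr.
have [p [q [Sp Sq rpq]]] := signed_simplex_split Kr.
exists (N (A *m r^T)) => [|p' q' Sp' Sq'].
  rewrite lt_neqAle (is_norm_ge0 N_norm) andbT eq_sym.
  apply/eqP => /(is_norm_eq0 N_norm)/eqP; rewrite rpq mulmxBr subr_eq0.
  exact/negP/S_disj.
by have := r_min _ (subsimplexB_signed Sp' Sq'); rewrite trmxK mulmxBr.
Qed.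

End Separation.

Section FacialDistancePos.
Variables (R : realType) (m n : nat) (N : 'cV[R]_m -> R) (A : 'M[R]_(m, n)).
Hypothesis N_norm : is_norm N.
Local Notation conv := (conv_cols A).

Lemma proper_face_set_dist_lb : exists2 c, 0 < c & forall F, is_face conv F ->
  F <> set0 -> F <> conv -> c <= set_dist N F (conv_out A F).
Proof.
pose sep S c := (forall p q, subsimplex S p -> subsimplex (~: S) q -> A *m p != A *m q) ->
  forall p q, subsimplex S p -> subsimplex (~: S) q -> c <= N (A *m p - A *m q).
have [c c_gt0 sep_c] : exists2 c, 0 < c & forall S, sep S c.
  apply: fin_pos_uniform => [S c c' /andP [_ c'_le] sepSc S_disj p q Sp Sq|S].
    exact: le_trans c'_le (sepSc S_disj p q Sp Sq).
  have [S_disj|S_meet] := pselect (forall p q, subsimplex S p -> subsimplex (~: S) q ->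
                                      A *m p != A *m q); last first.
    by exists 1 => // S_disj; exfalso; apply: S_meet.
  by have [c c_gt0 c_lb] := subsimplex_sep_pos N_norm S_disj; exists c => // _.
exists c => // F F_face F_neq0 F_neqT; have [F_sub F_convex _] := F_face.
have [i iF] : exists i, ~ F (col i A).
  apply/existsNP => F_cols; apply: F_neqT; apply/seteqP; split => // _ [p sp <-].
  exact: convex_mulmx_simplex F_convex sp (fun j _ => F_cols j).
apply: lb_le_inf.
  have [a Fa] : exists a, F a by apply/set0P/eqP.
  exists (N (a - col i A)), a, (col i A); split => //.
  exists (delta_mx i 0); last by rewrite colE.
  split=> [|j Fj]; first exact: simplex_delta.
  by rewrite mxE; have [eji|//] := eqVneq j i; rewrite eji in Fj.
move=> _ [a [b [Fa [q [sq q_out] <-] ->]]].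
have [p sp Ap] := F_sub _ Fa; rewrite -Ap in Fa *.
apply: (sep_c (face_cols A F)) => [p' q'||]; first exact: face_subsimplex_disjoint.
- exact/(face_mulmxP F_face sp).
- by split=> // j; rewrite inE negbK => /face_colsP; apply: q_out.
Qed.

Lemma exists_proper_face : (exists i j, col i A != col j A) ->
  exists F, [/\ is_face conv F, F <> set0 & F <> conv].
Proof.
move=> [i0 [j0 ij0]].
have [k Ak] : exists k, A k i0 != A k j0.
  apply/not_existsP => A_eq; move: ij0; apply/negP; rewrite negbK; apply/eqP.
  apply/matrixP => a b; rewrite (ord1 b) !mxE; have := A_eq a; by case: eqP.
pose jm := [arg min_(j < i0) A k j]%O.
have jm_min j : A k jm <= A k j by rewrite /jm; case: arg_minP => // l _; apply.
have conv_ge v : conv v -> A k jm <= v k 0.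
  move=> [p [p0 p1] <-]; rewrite mxE.
  apply: (@le_trans _ _ (\sum_j A k jm * p j 0)); first by rewrite -mulr_sumr p1 mulr1.
  by apply: ler_sum => j _; apply: ler_wpM2r; [apply: p0 | apply: jm_min].
exists [set v | conv v /\ v k 0 = A k jm]; split.
- split; first by move=> v [].
  + move=> v1 v2 t [c1 e1] [c2 e2] t01; split; first exact: conv_comb2.
    by rewrite !mxE e1 e2; ring.
  + move=> a b t ca cb /andP [t_gt0 t_lt1] [_]; rewrite !mxE => e.
    have := conv_ge _ ca; have := conv_ge _ cb => hb ha.
    have [ea eb] : a k 0 = A k jm /\ b k 0 = A k jm.
      by split; apply/eqP; rewrite eq_le ?ha ?hb andbT; nra.
    by split; split.
- move/seteqP => [F_sub _]; apply: (F_sub (col jm A)).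
  by split; [apply: conv_col | rewrite mxE].
- move/seteqP => [_ F_sup].
  have [[_ e1] [_ e2]] := (F_sup _ (conv_col A i0), F_sup _ (conv_col A j0)).
  by move: e1 e2; rewrite !mxE => e1 e2; rewrite e1 e2 eqxx in Ak.
Qed.

Lemma facial_dist_gt0 : (exists i j, col i A != col j A) -> 0 < facial_dist N A.
Proof.
move=> /exists_proper_face [F [F_face F_neq0 F_neqT]].
have [c c_gt0 c_lb] := proper_face_set_dist_lb.
apply: lt_le_trans c_gt0 _; apply: lb_le_inf; first by exists (set_dist N F (conv_out A F)), F.
by move=> _ [G [G_face G_neq0 G_neqT ->]]; apply: c_lb.
Qed.

End FacialDistancePos.

Section RelativeConstants.
Variables (R : realType) (m n : nat) (N : 'cV[R]_m -> R) (A : 'M[R]_(m, n)).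
Variable f : 'cV[R]_m -> \bar R.
Hypothesis N_norm : is_norm N.

Lemma LfA_le (L : R) : 0 <= L -> smooth_on N f (conv_cols A) L ->
  (LfA A f <= (L * diam N A ^+ 2 / 4)%:E)%E.
Proof.
move=> L_ge0 f_smooth; apply: ge_ereal_sup => _ [u [x [cu sx xZ ->]]]; rewrite lee_fin.
have d_gt0 := distZ_gt0 cu sx xZ.
have gap_le := f_smooth _ _ cu (ex_intro2 _ _ x sx erefl).
have Nx_le := norm_mulmx_subr_le_distZ N_norm cu sx.
have Nx_ge0 := is_norm_ge0 N_norm (A *m x - u).
have Nx_sqr : N (A *m x - u) ^+ 2 <= (distZ A x u * diam N A / 2) ^+ 2.
  by rewrite ler_sqr ?nnegrE // (le_trans Nx_ge0).
rewrite ler_pdivrMr ?exprn_gt0 //.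
have -> : L * diam N A ^+ 2 / 4 * distZ A x u ^+ 2 =
    L * (distZ A x u * diam N A / 2) ^+ 2 by field.
by apply: le_trans (ler_wpM2l L_ge0 Nx_sqr); lra.
Qed.

Lemma mufA_ge (mu : R) : 0 <= mu -> strongly_convex_on N f (conv_cols A) mu ->
  ((mu * facial_dist N A ^+ 2 / 4)%:E <= mufA A f)%E.
Proof.
move=> mu_ge0 f_strong; apply: le_ereal_inf_tmp => _ [u [x [cu sx xZ ->]]]; rewrite lee_fin.
have d_gt0 := distZ_gt0 cu sx xZ.
have gap_ge := f_strong _ _ cu (ex_intro2 _ _ x sx erefl).
have Phid_le := facial_dist_distZ_le N_norm cu sx.
have Phid_ge0 : 0 <= facial_dist N A * distZ A x u.
  by rewrite mulr_ge0 ?(facial_dist_ge0 A N_norm) // ltW.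
have Phid_sqr : (facial_dist N A * distZ A x u) ^+ 2 <= (2 * N (A *m x - u)) ^+ 2.
  by rewrite ler_sqr ?nnegrE // (le_trans Phid_ge0 Phid_le).
have := ler_wpM2l mu_ge0 Phid_sqr; rewrite !exprMn ler_pdivlMr ?exprn_gt0 //.
lra.
Qed.

End RelativeConstants.

Lemma fine_ratio_le (R : realType) (a b : \bar R) (U L : R) :
  (a <= U%:E)%E -> (L%:E <= b)%E -> 0 <= U -> 0 < L -> fine a / fine b <= U / L.
Proof.
move=> aU Lb U_ge0 L_gt0.
have fa_le : fine a <= U by case: a aU => [r||] //=; rewrite lee_fin.
case: b Lb => [r|_|] /=; rewrite ?leeNy_eq //; last first.
  by rewrite invr0 mulr0; apply: divr_ge0 => //; exact: ltW.
rewrite lee_fin => Lr; have r_gt0 := lt_le_trans L_gt0 Lr.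
apply: (@le_trans _ _ (U / r)); first by rewrite ler_pM2r ?invr_gt0.
by rewrite ler_wpM2l // lef_pV2 ?posrE.
Qed.

Theorem corollary2 (R : realType) (m n : nat) (N : 'cV[R]_m -> R)
  (A : 'M[R]_(m, n)) (f : 'cV[R]_m -> \bar R) (Lf muf : R) :
  is_norm N ->
  (exists i j, col i A != col j A) ->
  convex_ext f ->
  differentiable_on f (conv_cols A) ->
  0 < Lf -> 0 <= muf ->
  smooth_on N f (conv_cols A) Lf ->
  strongly_convex_on N f (conv_cols A) muf ->
  [/\ (LfA A f <= (Lf * diam N A ^+ 2 / 4)%:E)%E,
      ((muf * facial_dist N A ^+ 2 / 4)%:E <= mufA A f)%E &
      (0 < muf ->
         fine (LfA A f) / fine (mufA A f)
           <= Lf / muf * (diam N A ^+ 2 / facial_dist N A ^+ 2))].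
Proof.
move=> N_norm cols_neq _ _ Lf_gt0 muf_ge0 f_smooth f_strong.
have LfA_bound := LfA_le N_norm (ltW Lf_gt0) f_smooth.
have mufA_bound := mufA_ge N_norm muf_ge0 f_strong.
split=> // muf_gt0.
have Phi_gt0 := facial_dist_gt0 N_norm cols_neq.
have -> : Lf / muf * (diam N A ^+ 2 / facial_dist N A ^+ 2) =
    (Lf * diam N A ^+ 2 / 4) / (muf * facial_dist N A ^+ 2 / 4).
  by field; apply/andP; split; [exact: lt0r_neq0 Phi_gt0 | exact: lt0r_neq0 muf_gt0].
apply: fine_ratio_le LfA_bound mufA_bound _ _.
  by rewrite divr_ge0 // mulr_ge0 ?exprn_ge0 ?diam_ge0 ?ltW.
by rewrite divr_gt0 // mulr_gt0 // exprn_gt0.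
Qed.
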